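(* Let $\mu\in\mathcal{P}(\mathcal{X})$, $0<m_1\le m_2<\infty$, and let $\alpha,\tilde\alpha$ be tail functions with $\mu(B_{m_1})>0$ and $\alpha(r)>0$ for all $r>0$. Then $\mathcal{F}^{\mu}_{\alpha,\tilde\alpha}$ and $\mathcal{G}^{\mu}_{\alpha,\tilde\alpha}$ are cones in $L^2(\mu)$.
   Context: $\mathcal{X}$ is a Polish space with metric $d_{\mathcal{X}}$, $x_0\in\mathcal{X}$ fixed, $B_r=\{x:d_{\mathcal{X}}(x_0,x)\le r\}$, $B_r^{\mathsf c}=\mathcal{X}\setminus B_r$. A tail function is a non-increasing $\alpha:(0,\infty)\to[0,\infty)$ with $\lim_{r\to\infty}\alpha(r)=0$. $\mathcal{F}^{\mu}_{\alpha,\tilde\alpha}$ is the set of $f\in L^2(\mu)$ with $f\mathbf 1_{B_{m_2}}\ge0$ $\mu$-a.s., $\int_{B_r^{\mathsf c}}f_+\,d\mu\le\alpha(r)\int f\,d\mu$ for all $r\ge m_1$, and $\int_{B_r^{\mathsf c}}f_-\,d\mu\le\tilde\alpha(r)\int f\,d\mu$ for all $r\ge m_2$ ($f_+=\max\{f,0\}$, $f_-=-\min\{f,0\}$); $\mathcal{G}^{\mu}_{\alpha,\tilde\alpha}=\{g\in L^2(\mu):\int fg\,d\mu\ge0\text{ for all }f\in\mathcal{F}^{\mu}_{\alpha,\tilde\alpha}\}$. Elements of $L^2(\mu)$ are identified $\mu$-a.s. A cone in a Banach space $\mathsf Y$ is a closed convex set $C$ with $\lambda C\subseteq C$ for all $\lambda>0$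 and $C\cap -C=\{0\}$. *)

From HB Require Import structures.
From mathcomp Require Import all_boot all_order all_algebra.
From mathcomp Require Import all_classical all_reals all_analysis.
Set Implicit Arguments. Unset Strict Implicit. Unset Printing Implicit Defensive.
Import Order.TTheory GRing.Theory Num.Theory.
Import numFieldNormedType.Exports.
Local Open Scope classical_set_scope.
Local Open Scope ring_scope.

Section Polish.
Context {R : realType} {T : Type} (dX : T -> T -> R).

Definition is_metric : Prop :=
  [/\ forall x y, 0 <= dX x y,
      forall x y, dX x y = 0 <-> x = y,
      forall x y, dX x y = dX y x &
      forall x y z, dX x z <= dX x y + dX y z].

Definition dopen (U : set T) : Prop :=
  forall x, U x -> exists2 e : R, 0 < e & [set y | dX x y < e] `<=` U.

Definition dcauchy (u : nat -> T) : Prop :=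
  forall e : R, 0 < e -> exists N : nat, forall n m, (N <= n)%N -> (N <= m)%N ->
    dX (u n) (u m) < e.

Definition dconverges (u : nat -> T) (x : T) : Prop :=
  forall e : R, 0 < e -> exists N : nat, forall n, (N <= n)%N -> dX (u n) x < e.

Definition dcomplete : Prop :=
  forall u, dcauchy u -> exists x, dconverges u x.

Definition dseparable : Prop :=
  exists D : set T, countable D /\
    forall x (e : R), 0 < e -> exists2 y, D y & dX x y < e.

Definition polish_metric : Prop := [/\ is_metric, dcomplete & dseparable].
End Polish.

Definition polish_borel {disp : measure_display} {T : measurableType disp}
  {R : realType} (dX : T -> T -> R) : Prop :=
  polish_metric dX /\ (@measurable disp T) = <<s dopen dX >>.

Definition Bball {T : Type} {R : realType} (dX : T -> T -> R) (x0 : T) (r : R)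
  : set T := [set x | dX x0 x <= r].

Definition tail_function {R : realType} (alpha : R -> R) : Prop :=
  [/\ forall r, 0 < r -> 0 <= alpha r,
      forall r s, 0 < r -> r <= s -> alpha s <= alpha r &
      alpha x @[x --> +oo] --> 0].

(** * L^2(mu), with elements represented by functions, identified mu-a.e. *)
Section L2.
Context {disp : measure_display} {T : measurableType disp} {R : realType}.
Variable mu : {measure set T -> \bar R}.

Definition L2 (f : T -> R) : Prop := f \in Lfun mu 2%:E.

Definition L2dist (f g : T -> R) : \bar R :=
  'N[mu]_(2%:E)[EFin \o (fun x => f x - g x)].

(** A subset of L^2(mu): a set of L^2 functions stable under mu-a.e. equality
    (i.e. a set of equivalence classes). *)
Definition L2subset (C : set (T -> R)) : Prop :=
  C `<=` L2 /\
  forall f g, C f -> L2 g -> ae_eq mu setT f g -> C g.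

Definition L2cone (C : set (T -> R)) : Prop :=
  [/\ L2subset C,
      (forall (u : nat -> T -> R) (f : T -> R), (forall n, C (u n)) -> L2 f ->
         L2dist (u n) f @[n --> \oo] --> 0%E -> C f),
      (forall f g (t : R), C f -> C g -> 0 <= t <= 1 ->
         C (fun x => t * f x + (1 - t) * g x)),
      (forall (lam : R) f, 0 < lam -> C f -> C (fun x => lam * f x)) &
      (C (fun _ => 0) /\
       forall f, C f -> C (fun x => - f x) -> ae_eq mu setT f (fun _ => 0))].
End L2.

Section FG.
Context {disp : measure_display} {T : measurableType disp} {R : realType}.
Variables (dX : T -> T -> R) (x0 : T) (mu : {measure set T -> \bar R}).
Variables (m1 m2 : R) (alpha alpha' : R -> R).

Local Open Scope ereal_scope.

Definition posp (f : T -> R) : T -> R := fun x => Num.max (f x) 0%R.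
Definition negp (f : T -> R) : T -> R := fun x => Num.max (- f x)%R 0%R.

Definition Fset : set (T -> R) :=
  [set f | L2 mu f /\
    {ae mu, forall x, Bball dX x0 m2 x -> (0 <= f x)%R} /\
    (forall r, (m1 <= r)%R ->
       \int[mu]_(x in ~` Bball dX x0 r) (posp f x)%:E
         <= (alpha r)%:E * \int[mu]_x (f x)%:E) /\
    (forall r, (m2 <= r)%R ->
       \int[mu]_(x in ~` Bball dX x0 r) (negp f x)%:E
         <= (alpha' r)%:E * \int[mu]_x (f x)%:E)].

Definition Gset : set (T -> R) :=
  [set g | L2 mu g /\
    forall f, Fset f -> 0 <= \int[mu]_x (f x * g x)%:E].
End FG.

From HB Require Import structures.
From mathcomp Require Import all_boot all_order all_algebra.
From mathcomp Require Import all_classical all_reals all_analysis.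
From mathcomp Require Import measurable_realfun.
From mathcomp Require Import lra.
Import Order.TTheory GRing.Theory Num.Theory.
Import numFieldNormedType.Exports.
Local Open Scope classical_set_scope.
Local Open Scope ring_scope.
Set Implicit Arguments.
Unset Strict Implicit.

(* The sign condition on B_{m2} and the two tail conditions that cut F out of
   L^2(mu) are stable under nonnegative combinations, because f |-> f_+ and
   f |-> f_- are sublinear, and under L^2 limits, because they are 1-Lipschitz
   and on a finite measure space the integrals involved are controlled by the
   L^2 distance. If f and -f are both in F, then f vanishes on B_{m2} by the
   sign condition, and adding the tail conditions at r = m2 for f and -f bounds
   the integral of |f| outside B_{m2} by 0.
   G is the dual cone of F, hence a closed convex cone; it is pointed because F
   is total in L^2: c 1_{B_{m1}} + k lies in F for every nonnegative k
   supported in a ball B_r as soon as c alpha(r) mu(B_{m1}) >= int k, and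
   testing g against these functions with k = g_+ 1_{B_r} gives g <= 0 a.e. on
   B_r; the same applies to -g. *)

Lemma cvg_dist_le_fine (R : realType) (x : nat -> R) (l c : R) (e : nat -> \bar R) :
  e n @[n --> \oo] --> 0%E -> (forall n, `|x n - l| <= c * fine (e n)) ->
  x n @[n --> \oo] --> l.
Proof.
move=> /fine_cvgP[_ e0] xe; apply/cvgrPdist_le => eps eps0.
have ce0 : c * fine (e n) @[n --> \oo] --> 0 by rewrite -(mulr0 c); exact: cvgMl_tmp.
near=> n; rewrite distrC (le_trans (xe n)) //.
near: n; apply: filterS (@cvgr0_norm_le _ _ _ _ _ _ ce0 _ eps0) => n.
by apply: le_trans; rewrite ler_norm.
Unshelve. all: by end_near.
Qed.

Section Rintegral_facts.
Context d (T : measurableType d) (R : realType) (mu : {measure set T -> \bar R}).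
Local Notation Rint := (Rintegral mu).

Lemma integral_EFinE A f : measurable A -> mu.-integrable A (EFin \o f) ->
  (\int[mu]_(x in A) (f x)%:E)%E = (Rint A f)%:E.
Proof. by move=> mA /(integrable_fin_num mA) fin; rewrite fineK. Qed.

Lemma eq_Rintegral_ae A f g : measurable A ->
  measurable_fun setT f -> measurable_fun setT g -> ae_eq mu A f g -> Rint A f = Rint A g.
Proof.
move=> mA mf mg fg; congr fine; apply: ae_eq_integral => //.
- by apply/measurable_EFinP; exact: measurable_funS mf.
- by apply/measurable_EFinP; exact: measurable_funS mg.
by apply: filterS fg => x + Ax => /(_ Ax) /= ->.
Qed.

Lemma Rintegral_eq0_ae A h : measurable A -> mu.-integrable A (EFin \o h) ->
  (forall x, A x -> 0 <= h x) -> Rint A h = 0 -> ae_eq mu A h (cst 0).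
Proof.
move=> mA ih h0 h_eq0.
have mh : measurable_fun A (EFin \o h) by case/integrableP: ih.
have : (\int[mu]_(x in A) `|(h x)%:E| = 0)%E.
  rewrite -[RHS]/(0%:E) -h_eq0 -integral_EFinE //.
  by apply: eq_integral => x /[!inE] Ax; rewrite /= ger0_norm // h0.
move/(ae_eq_integral_abs _ mA mh); apply: filterS => x + Ax => /(_ Ax) /=.
by case.
Qed.

Lemma Rintegral_comb A a b f g : measurable A ->
  mu.-integrable A (EFin \o f) -> mu.-integrable A (EFin \o g) ->
  Rint A (fun x => a * f x + b * g x) = a * Rint A f + b * Rint A g.
Proof.
move=> mA If Ig; rewrite RintegralD ?RintegralZl //.
  exact: (integrableZl mA a If).
exact: (integrableZl mA b Ig).
Qed.

Lemma RintegralN A f : measurable A -> mu.-integrable A (EFin \o f) ->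
  Rint A (fun x => - f x) = - Rint A f.
Proof.
move=> mA If; rewrite -mulN1r -RintegralZl //.
by apply: eq_Rintegral => x _; rewrite mulN1r.
Qed.

Lemma le_Rintegral_subset A B f : measurable A -> measurable B -> A `<=` B ->
  mu.-integrable B (EFin \o f) -> (forall x, B x -> 0 <= f x) -> Rint A f <= Rint B f.
Proof.
move=> mA mB AB iB f0; rewrite /Rintegral fine_le ?(integrable_fin_num mB) //.
- by have := integrable_fin_num mA (integrableS mB mA AB iB).
- by apply: ge0_subset_integral => //; case/integrableP: iB.
Qed.

End Rintegral_facts.

Section L2_space.
Context d (T : measurableType d) (R : realType) (mu : {measure set T -> \bar R}).
Local Notation L2 := (L2 mu).
Local Notation Rint := (Rintegral mu).
Local Notation "''N_2' [ f ]" := ('N[mu]_2%:E[EFin \o f])%E.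

Lemma L2_measurable f : L2 f -> measurable_fun setT f.
Proof. by rewrite /L2 inE => /andP[]; rewrite inE. Qed.

Lemma L2_norm_fin_num f : L2 f -> 'N_2[f] \is a fin_num.
Proof.
by rewrite /L2 inE => /andP[_]; rewrite inE /= /finite_norm ge0_fin_numE ?Lnorm_ge0.
Qed.

Lemma L2_comb a b f g : L2 f -> L2 g -> L2 (fun x => a * f x + b * g x).
Proof.
move=> Lf Lg; have [L0 Lcomb] := @Lfun_submod_closed _ _ _ mu 2%:E (lee1n 2).
suff -> : (fun x => a * f x + b * g x) = a *: f + (b *: g + 0).
  exact: Lcomb a f _ Lf (Lcomb b g 0 Lg L0).
by apply/funext => x /=; rewrite addr0.
Qed.

Lemma L2_0 : L2 (fun _ => 0).
Proof. by have [] := @Lfun_submod_closed _ _ _ mu 2%:E (lee1n 2). Qed.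

Lemma L2_sub f g : L2 f -> L2 g -> L2 (fun x => f x - g x).
Proof.
move=> Lf Lg; have := L2_comb 1 (-1) Lf Lg.
by congr L2; apply/funext => x; rewrite mul1r mulN1r.
Qed.

Lemma L2_opp f : L2 f -> L2 (fun x => - f x).
Proof.
by move=> Lf; have := L2_sub L2_0 Lf; congr L2; apply/funext => x; rewrite sub0r.
Qed.

Lemma L2_dominated (f g : T -> R) : measurable_fun setT f ->
  (forall x, `|f x| <= `|g x|) -> L2 g -> L2 f.
Proof.
move=> mf fg Lg; have mg := L2_measurable Lg.
rewrite /L2 inE; apply/andP; split; first by rewrite inE.
move: Lg; rewrite /L2 inE => /andP[_]; rewrite !inE /= /finite_norm.
have mpow (h : T -> R) : measurable_fun setT h ->
    measurable_fun setT (EFin \o (fun x => `|h x| `^ 2)).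
  move=> mh; apply/measurable_EFinP.
  by apply: (measurableT_comp (measurable_powR _)); exact: measurableT_comp.
apply: le_lt_trans; rewrite unlock /= gt0_ler_poweR // ?in_itv /= ?leey ?integral_ge0 //.
apply: ge0_le_integral => //; [exact: mpow|exact: mpow|].
by move=> x _; rewrite lee_fin ge0_ler_powR.
Qed.

Lemma L2_normr f : L2 f -> L2 (fun x => `|f x|).
Proof.
move=> Lf; apply: (L2_dominated _ _ Lf); last by move=> x; rewrite normr_id.
by apply: measurableT_comp => //; exact: L2_measurable Lf.
Qed.

Lemma L2_mul_integrable f g : L2 f -> L2 g ->
  mu.-integrable setT (EFin \o (fun x => f x * g x)).
Proof. by move=> Lf Lg; apply/Lfun1_integrable; exact: Lfun2_mul_Lfun1. Qed.

Lemma Rintegral_normrM_le f g : L2 f -> L2 g ->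
  Rint setT (fun x => `|f x * g x|) <= fine 'N_2[f] * fine 'N_2[g].
Proof.
move=> Lf Lg; rewrite -lee_fin EFinM !(fineK (L2_norm_fin_num _)) //.
rewrite -integral_EFinE //; last first.
  by apply/Lfun1_integrable; apply: Lfun_norm; exact: Lfun2_mul_Lfun1.
apply: le_trans (@hoelder _ _ _ mu f g 2 2 _ _ _ _ _) => //; try exact: L2_measurable.
  rewrite Lnorm1 le_eqVlt; apply/orP; left; apply/eqP/eq_integral => x _.
  exact/esym/abse_EFin.
by rewrite [RHS]splitr !div1r.
Qed.

Lemma dist_Rintegral_mul_le w g h : L2 w -> L2 g -> L2 h ->
  `|Rint setT (fun x => w x * g x) - Rint setT (fun x => w x * h x)|
    <= fine 'N_2[w] * fine (L2dist mu g h).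
Proof.
move=> Lw Lg Lh; have Lgh := L2_sub Lg Lh.
rewrite -RintegralB ?L2_mul_integrable //.
under eq_Rintegral do rewrite -mulrBr.
apply: le_trans (Rintegral_normrM_le Lw Lgh).
exact/le_normr_Rintegral/L2_mul_integrable.
Qed.

Lemma cvg_Rintegral_mul w u f : L2 w -> L2 f -> (forall n, L2 (u n)) ->
  L2dist mu (u n) f @[n --> \oo] --> 0%E ->
  Rint setT (fun x => w x * u n x) @[n --> \oo] --> Rint setT (fun x => w x * f x).
Proof.
by move=> Lw Lf Lu uf; apply: cvg_dist_le_fine uf _ => n; exact: dist_Rintegral_mul_le.
Qed.

End L2_space.

Section L2_finite_measure.
Context d (T : measurableType d) (R : realType).
Variable mu : {finite_measure set T -> \bar R}.
Local Notation L2 := (L2 mu).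
Local Notation Rint := (Rintegral mu).
Local Notation "''N_2' [ f ]" := ('N[mu]_2%:E[EFin \o f])%E.

Lemma L2_integrable A f : measurable A -> L2 f -> mu.-integrable A (EFin \o f).
Proof.
move=> mA /(Lfun_subset12 (fin_num_measure _ _ measurableT)) /Lfun1_integrable.
exact: integrableS.
Qed.

Lemma L2_cst c : L2 (fun _ => c).
Proof. exact: Lfun_cst. Qed.

Lemma dist_Rintegral_lipschitz_le (phi : R -> R) A g h : measurable A ->
  (forall a b, `|phi a - phi b| <= `|a - b|) ->
  L2 g -> L2 h -> L2 (phi \o g) -> L2 (phi \o h) ->
  `|Rint A (phi \o g) - Rint A (phi \o h)|
    <= fine 'N_2[cst 1%R] * fine (L2dist mu g h).
Proof.
move=> mA phi_lip Lg Lh Lpg Lph; have Lgh := L2_sub Lg Lh.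
rewrite -RintegralB ?L2_integrable //.
apply: le_trans (le_normr_Rintegral mA (L2_integrable mA (L2_sub Lpg Lph))) _.
apply: (@le_trans _ _ (Rint A (fun x => `|g x - h x|))).
  apply: le_Rintegral => //; [exact/L2_integrable/L2_normr/L2_sub|
    exact/L2_integrable/L2_normr|by move=> x _; exact: phi_lip].
apply: le_trans (Rintegral_normrM_le (L2_cst 1) Lgh).
under [leRHS]eq_Rintegral do rewrite mul1r.
by apply: le_Rintegral_subset => //; exact/L2_integrable/L2_normr.
Qed.

Lemma L2_lipschitz_comp (phi : R -> R) f : measurable_fun setT phi ->
  (forall a b, `|phi a - phi b| <= `|a - b|) -> L2 f -> L2 (phi \o f).
Proof.
move=> mphi phi_lip Lf.
apply: (L2_dominated _ _ (L2_comb 1 1 (L2_normr Lf) (L2_cst `|phi 0|))).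
  by apply: measurableT_comp => //; exact: L2_measurable Lf.
move=> x; rewrite !mul1r [leRHS]ger0_norm ?addr_ge0 // -lerBlDr.
by apply: le_trans (lerB_dist _ _) _; have := phi_lip (f x) 0; rewrite subr0.
Qed.

Lemma cvg_Rintegral_lipschitz (phi : R -> R) A u f : measurable A ->
  measurable_fun setT phi -> (forall a b, `|phi a - phi b| <= `|a - b|) ->
  L2 f -> (forall n, L2 (u n)) -> L2dist mu (u n) f @[n --> \oo] --> 0%E ->
  Rint A (phi \o u n) @[n --> \oo] --> Rint A (phi \o f).
Proof.
move=> mA mphi phi_lip Lf Lu uf; apply: cvg_dist_le_fine uf _ => n.
by apply: dist_Rintegral_lipschitz_le => //; exact: L2_lipschitz_comp.
Qed.

Lemma cvg_Rintegral u f : L2 f -> (forall n, L2 (u n)) ->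
  L2dist mu (u n) f @[n --> \oo] --> 0%E ->
  Rint setT (u n) @[n --> \oo] --> Rint setT f.
Proof.
move=> Lf Lu uf; have := cvg_Rintegral_mul (L2_cst 1) Lf Lu uf.
by under eq_fun do under eq_Rintegral do rewrite mul1r; under eq_Rintegral do rewrite mul1r.
Qed.

End L2_finite_measure.

Section L2_cone.
Context d (T : measurableType d) (R : realType) (mu : {measure set T -> \bar R}).
Variable C : set (T -> R).

Lemma L2cone_conic : L2subset mu C ->
  (forall u f, (forall n, C (u n)) -> L2 mu f ->
     L2dist mu (u n) f @[n --> \oo] --> 0%E -> C f) ->
  (forall s t f g, 0 <= s -> 0 <= t -> C f -> C g ->
     C (fun x => s * f x + t * g x)) ->
  C (fun _ => 0) ->
  (forall f, C f -> C (fun x => - f x) -> ae_eq mu setT f (cst 0)) ->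
  L2cone mu C.
Proof.
move=> CL2 Cclosed Cconic C0 Cpointed; split => //.
- by move=> f g t Cf Cg /andP[t0 t1]; apply: Cconic; rewrite ?subr_ge0.
- move=> l f /ltW l0 Cf; have := Cconic _ _ _ _ l0 (lexx 0) Cf Cf.
  by congr C; apply/funext => x; rewrite mul0r addr0.
Qed.

End L2_cone.

Section L2_dual.
Context d (T : measurableType d) (R : realType) (mu : {measure set T -> \bar R}).
Local Notation L2 := (L2 mu).
Local Notation Rint := (Rintegral mu).
Variable C : set (T -> R).
Hypothesis CL2 : C `<=` L2.

Definition L2dual : set (T -> R) :=
  [set g | L2 g /\ forall f, C f -> (0 <= \int[mu]_x (f x * g x)%:E)%E].

Lemma L2dualE g : L2dual g <->
  L2 g /\ forall f, C f -> 0 <= Rint setT (fun x => f x * g x).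
Proof.
split=> -[Lg g_ge0]; split=> // f Cf; have := g_ge0 f Cf;
  by rewrite integral_EFinE ?lee_fin //; exact: L2_mul_integrable (CL2 Cf) Lg.
Qed.

Lemma L2dual_ae_eq : L2subset mu L2dual.
Proof.
split=> [g /L2dualE[]//|g h /L2dualE[Lg g_ge0] Lh gh].
apply/L2dualE; split=> // f Cf; rewrite -(eq_Rintegral_ae measurableT _ _ (ae_eq_mul2l f gh)).
- exact: g_ge0.
- by apply: measurable_funM; apply: L2_measurable; [exact: CL2|exact: Lg].
- by apply: measurable_funM; apply: L2_measurable; [exact: CL2|exact: Lh].
Qed.

Lemma L2dual_closed u g : (forall n, L2dual (u n)) -> L2 g ->
  L2dist mu (u n) g @[n --> \oo] --> 0%E -> L2dual g.
Proof.
move=> ug Lg ugg; have Lu n : L2 (u n) by have [] := (L2dualE _).1 (ug n).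
apply/L2dualE; split=> // f Cf.
apply: (cvgr_to_ge (cvg_Rintegral_mul (CL2 Cf) Lg Lu ugg)).
by apply: nearW => n; have [_] := (L2dualE _).1 (ug n); apply.
Qed.

Lemma L2dual_conic s t g h : 0 <= s -> 0 <= t -> L2dual g -> L2dual h ->
  L2dual (fun x => s * g x + t * h x).
Proof.
move=> s0 t0 /L2dualE[Lg g_ge0] /L2dualE[Lh h_ge0].
apply/L2dualE; split=> [|f Cf]; first exact: L2_comb.
under eq_Rintegral do rewrite mulrDr mulrCA [f _ * (t * _)]mulrCA.
have Lf := CL2 Cf; rewrite Rintegral_comb ?L2_mul_integrable //.
by rewrite addr_ge0 // mulr_ge0 // ?g_ge0 ?h_ge0.
Qed.

Lemma L2dual0 : L2dual (fun _ => 0).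
Proof.
apply/L2dualE; split=> [|f _]; first exact: L2_0.
by apply: Rintegral_ge0 => x _; rewrite mulr0.
Qed.

Hypothesis C_total : forall g, L2 g ->
  (forall f, C f -> Rint setT (fun x => f x * g x) = 0) -> ae_eq mu setT g (cst 0).

Lemma L2dual_pointed g : L2dual g -> L2dual (fun x => - g x) ->
  ae_eq mu setT g (cst 0).
Proof.
move=> /L2dualE[Lg g_ge0] /L2dualE[_ Ng_ge0]; apply: C_total => // f Cf.
apply/eqP; rewrite eq_le g_ge0 // andbT -oppr_ge0 -RintegralN //.
  by under eq_Rintegral do rewrite -mulrN; exact: Ng_ge0.
exact: L2_mul_integrable (CL2 Cf) Lg.
Qed.

Lemma L2dual_cone : L2cone mu L2dual.
Proof.
apply: L2cone_conic; [exact: L2dual_ae_eq|exact: L2dual_closed|exact: L2dual_conic|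
  exact: L2dual0|exact: L2dual_pointed].
Qed.

End L2_dual.

Section positive_part.
Context {R : realType}.

Definition pos_part (a : R) := Num.max a 0.
Definition neg_part (a : R) := pos_part (- a).

Lemma pos_part_ge0 a : 0 <= pos_part a.
Proof. by rewrite /pos_part le_max lexx orbT. Qed.

Lemma measurable_pos_part : measurable_fun setT pos_part.
Proof. exact: measurable_maxr. Qed.

Lemma pos_part_lipschitz a b : `|pos_part a - pos_part b| <= `|a - b|.
Proof.
have [ab ba] : a - b <= `|a - b| /\ b - a <= `|a - b|.
  by rewrite ler_norm distrC ler_norm.
rewrite /pos_part !maxEle; case: (leP a 0); case: (leP b 0) => *;
  apply/ler_normlP; split; lra.
Qed.

Lemma pos_partD_le a b : pos_part (a + b) <= pos_part a + pos_part b.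
Proof.
rewrite /pos_part !maxEle.
by case: (leP a 0) => ?; case: (leP b 0) => ?; case: (leP (a + b) 0) => ?; lra.
Qed.

Lemma pos_partZ l a : 0 <= l -> pos_part (l * a) = l * pos_part a.
Proof. by move=> l0; rewrite /pos_part maxr_pMr // mulr0. Qed.

Lemma pos_part_eq0 a : (pos_part a == 0) = (a <= 0).
Proof. by rewrite /pos_part maxEle; case: leP => [_|a_gt0]; rewrite ?eqxx ?gt_eqF. Qed.

Lemma neg_part_eq0 a : (neg_part a == 0) = (0 <= a).
Proof. by rewrite /neg_part pos_part_eq0 oppr_le0. Qed.

Lemma pos_part_norm_le a : `|pos_part a| <= `|a|.
Proof. by have := pos_part_lipschitz a 0; rewrite {2}/pos_part maxxx !subr0. Qed.

Lemma pos_part_id a : 0 <= a -> pos_part a = a.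
Proof. by move=> a0; rewrite /pos_part max_l. Qed.

Lemma pos_part_mul_ge0 a : 0 <= pos_part a * a.
Proof.
by rewrite /pos_part maxEle; case: (leP a 0) => [|/ltW a0]; rewrite ?mul0r ?mulr_ge0.
Qed.

Lemma measurable_neg_part : measurable_fun setT neg_part.
Proof. exact: measurableT_comp measurable_pos_part _. Qed.

Lemma neg_part_lipschitz a b : `|neg_part a - neg_part b| <= `|a - b|.
Proof. by rewrite (le_trans (pos_part_lipschitz _ _)) // -opprD normrN. Qed.

Lemma neg_partD_le a b : neg_part (a + b) <= neg_part a + neg_part b.
Proof. by rewrite /neg_part opprD pos_partD_le. Qed.

Lemma neg_partZ l a : 0 <= l -> neg_part (l * a) = l * neg_part a.
Proof. by move=> l0; rewrite /neg_part -mulrN pos_partZ. Qed.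

Definition sublinear_contraction (phi : R -> R) : Prop :=
  [/\ measurable_fun setT phi,
      forall a b, `|phi a - phi b| <= `|a - b|,
      forall a b, phi (a + b) <= phi a + phi b &
      forall l a, 0 <= l -> phi (l * a) = l * phi a].

Lemma pos_part_sublinear : sublinear_contraction pos_part.
Proof.
split; [exact: measurable_pos_part|exact: pos_part_lipschitz|
  exact: pos_partD_le|exact: pos_partZ].
Qed.

Lemma neg_part_sublinear : sublinear_contraction neg_part.
Proof.
split; [exact: measurable_neg_part|exact: neg_part_lipschitz|
  exact: neg_partD_le|exact: neg_partZ].
Qed.

End positive_part.

Section tail_bound.
Context d (T : measurableType d) (R : realType).
Variable mu : {finite_measure set T -> \bar R}.
Local Notation L2 := (L2 mu).
Local Notation Rint := (Rintegral mu).
Variable phi : R -> R.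
Hypothesis phiP : sublinear_contraction phi.

Definition tail_bound (A : set T) (c : R) (f : T -> R) : Prop :=
  Rint A (phi \o f) <= c * Rint setT f.

Variables (A : set T) (c : R).
Hypothesis mA : measurable A.

Let L2_phi f : L2 f -> L2 (phi \o f).
Proof. by case: phiP => mphi phi_lip _ _; exact: L2_lipschitz_comp. Qed.

Lemma tail_boundE f : L2 f -> tail_bound A c f <->
  (\int[mu]_(x in A) (phi (f x))%:E <= c%:E * \int[mu]_x (f x)%:E)%E.
Proof.
move=> Lf; rewrite /tail_bound !integral_EFinE -?EFinM ?lee_fin //.
- exact: L2_integrable.
- exact: L2_integrable (L2_phi Lf).
Qed.

Lemma tail_bound_ae_eq f g : L2 f -> L2 g -> ae_eq mu setT f g ->
  tail_bound A c f -> tail_bound A c g.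
Proof.
case: phiP => mphi _ _ _ Lf Lg fg; have [mf mg] := (L2_measurable Lf, L2_measurable Lg).
rewrite /tail_bound (eq_Rintegral_ae measurableT mf mg fg).
rewrite (eq_Rintegral_ae mA _ _ (ae_eq_subset (@subsetT _ A) (ae_eq_comp phi fg))) //.
- exact: measurableT_comp.
- exact: measurableT_comp.
Qed.

Lemma tail_bound_closed u f : L2 f -> (forall n, L2 (u n)) ->
  L2dist mu (u n) f @[n --> \oo] --> 0%E ->
  (forall n, tail_bound A c (u n)) -> tail_bound A c f.
Proof.
case: phiP => mphi phi_lip _ _ Lf Lu uf ub; rewrite /tail_bound -subr_le0.
have phi_cvg := cvg_Rintegral_lipschitz mA mphi phi_lip Lf Lu uf.
move: (cvg_Rintegral Lf Lu uf) => /(cvgMl_tmp (a := c)) /(cvgB phi_cvg) /cvgr_to_le.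
by apply; apply: nearW => n; rewrite subr_le0; exact: ub.
Qed.

Lemma tail_bound_conic s t f g : 0 <= s -> 0 <= t -> L2 f -> L2 g ->
  tail_bound A c f -> tail_bound A c g -> tail_bound A c (fun x => s * f x + t * g x).
Proof.
case: phiP => _ _ phiD_le phiZ s0 t0 Lf Lg bf bg.
have [Lpf Lpg] := (L2_phi Lf, L2_phi Lg).
rewrite /tail_bound [Rint setT _](Rintegral_comb _ _ measurableT
  (L2_integrable measurableT Lf) (L2_integrable measurableT Lg)).
apply: (@le_trans _ _ (Rint A (fun x => s * phi (f x) + t * phi (g x)))).
  apply: le_Rintegral => //.
  - exact: L2_integrable mA (L2_phi (L2_comb s t Lf Lg)).
  - exact: L2_integrable mA (L2_comb s t Lpf Lpg).
  - by move=> x _ /=; rewrite -phiZ // -[t * phi _]phiZ // phiD_le.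
rewrite (Rintegral_comb _ _ mA (L2_integrable mA Lpf) (L2_integrable mA Lpg)).
by rewrite mulrDr; apply: lerD; rewrite mulrCA ler_wpM2l.
Qed.

Lemma tail_bound0 : tail_bound A c (fun _ => 0).
Proof.
case: phiP => _ _ _ phiZ; have phi0 : phi 0 = 0.
  by have := @phiZ 0 0 (lexx 0); rewrite !mul0r.
by rewrite /tail_bound !Rintegral_cst // phi0 !mul0r mulr0.
Qed.

End tail_bound.

Section sign_conditions.
Context d (T : measurableType d) (R : realType).
Variable mu : {finite_measure set T -> \bar R}.
Local Notation L2 := (L2 mu).
Local Notation Rint := (Rintegral mu).
Variable A : set T.
Hypothesis mA : measurable A.

Let L2_neg_part f : L2 f -> L2 (neg_part \o f).
Proof. exact: L2_lipschitz_comp measurable_neg_part neg_part_lipschitz. Qed.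

Lemma ae_ge0E f : L2 f ->
  {ae mu, forall x, A x -> 0 <= f x} <-> Rint A (neg_part \o f) = 0.
Proof.
move=> Lf; split=> [f_ge0|nf0].
- rewrite (@eq_Rintegral_ae _ _ _ _ _ _ (cst 0) mA) ?Rintegral_cst ?mul0r //.
  + exact: L2_measurable (L2_neg_part Lf).
  + apply: filterS f_ge0 => x + Ax => /(_ Ax) f_ge0.
    by apply/eqP; rewrite /= neg_part_eq0.
- have := Rintegral_eq0_ae mA (L2_integrable mA (L2_neg_part Lf))
    (fun x _ => pos_part_ge0 _) nf0.
  by apply: filterS => x + Ax => /(_ Ax) /eqP; rewrite neg_part_eq0.
Qed.

Lemma ae_ge0_closed u f : L2 f -> (forall n, L2 (u n)) ->
  L2dist mu (u n) f @[n --> \oo] --> 0%E ->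
  (forall n, {ae mu, forall x, A x -> 0 <= u n x}) ->
  {ae mu, forall x, A x -> 0 <= f x}.
Proof.
move=> Lf Lu uf u_ge0; apply/(ae_ge0E Lf)/eqP.
rewrite eq_le Rintegral_ge0 ?andbT; last by move=> x _; exact: pos_part_ge0.
apply: (cvgr_to_le (cvg_Rintegral_lipschitz mA measurable_neg_part
  neg_part_lipschitz Lf Lu uf)).
by apply: nearW => n; rewrite ((ae_ge0E (Lu n)).1 (u_ge0 n)).
Qed.

Lemma tail_bound_pos_part_opp c f : L2 f -> tail_bound mu pos_part A c f ->
  tail_bound mu pos_part A c (fun x => - f x) -> ae_eq mu A f (cst 0).
Proof.
move=> Lf; have LNf := L2_opp Lf.
have Lpos g : L2 g -> L2 (pos_part \o g).
  exact: L2_lipschitz_comp measurable_pos_part pos_part_lipschitz.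
rewrite /tail_bound RintegralN ?L2_integrable // mulrN => pf pNf.
have [pf_ge0 pNf_ge0] : 0 <= Rint A (pos_part \o f) /\
    0 <= Rint A (pos_part \o (fun x => - f x)).
  by split; apply: Rintegral_ge0 => x _; exact: pos_part_ge0.
have pf0 : Rint A (pos_part \o f) = 0 by lra.
have pNf0 : Rint A (pos_part \o (fun x => - f x)) = 0 by lra.
have := Rintegral_eq0_ae mA (L2_integrable mA (Lpos _ Lf)) (fun x _ => pos_part_ge0 _) pf0.
have := Rintegral_eq0_ae mA (L2_integrable mA (Lpos _ LNf)) (fun x _ => pos_part_ge0 _) pNf0.
apply: filterS2 => x + + Ax => /(_ Ax) /eqP + /(_ Ax) /eqP.
by rewrite /= !pos_part_eq0 oppr_le0 => f_ge0 f_le0; apply/eqP; rewrite eq_le f_le0.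
Qed.

End sign_conditions.

Lemma dopen_setC_Bball {R : realType} {T : Type} (dX : T -> T -> R) x0 r :
  is_metric dX -> dopen dX (~` Bball dX x0 r).
Proof.
case=> _ _ dXC dX_triangle x /negP; rewrite -ltNge => rx.
exists (dX x0 x - r); first by rewrite subr_gt0.
move=> y /= xy; apply/negP; rewrite -ltNge.
by have := dX_triangle x0 y x; rewrite (dXC y x); lra.
Qed.

Lemma Bball_le {R : realType} {T : Type} (dX : T -> T -> R) x0 r s :
  r <= s -> Bball dX x0 r `<=` Bball dX x0 s.
Proof. by move=> rs x /= /le_trans; apply. Qed.

Section Fset_cone.
Context d (T : measurableType d) (R : realType) (dX : T -> T -> R) (x0 : T).
Variable mu : {finite_measure set T -> \bar R}.
Variables (m1 m2 : R) (alpha alpha' : R -> R).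
Hypotheses (mB : forall r, measurable (Bball dX x0 r))
  (m1_gt0 : 0 < m1) (m12 : m1 <= m2)
  (alpha_tail : tail_function alpha) (alpha'_tail : tail_function alpha').
Local Notation L2 := (L2 mu).
Local Notation Rint := (Rintegral mu).
Local Notation B := (Bball dX x0).
Local Notation F := (Fset dX x0 mu m1 m2 alpha alpha').

Let mBc r : measurable (~` B r) := measurableC (mB r).

Lemma FsetE f : F f <-> [/\ L2 f, {ae mu, forall x, B m2 x -> 0 <= f x},
  forall r, m1 <= r -> tail_bound mu pos_part (~` B r) (alpha r) f &
  forall r, m2 <= r -> tail_bound mu neg_part (~` B r) (alpha' r) f].
Proof.
split=> [[Lf [f_ge0 [pf nf]]]|[Lf f_ge0 pf nf]].
  split=> // r r12; apply/tail_boundE => //.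
  - exact: pos_part_sublinear.
  - exact: pf.
  - exact: neg_part_sublinear.
  - exact: nf.
split=> //; split=> //; split=> r r12.
- by apply/(tail_boundE pos_part_sublinear) => //; exact: pf.
- by apply/(tail_boundE neg_part_sublinear) => //; exact: nf.
Qed.

Lemma Fset_ae_eq : L2subset mu F.
Proof.
split=> [f /FsetE[]//|f g /FsetE[Lf f_ge0 pf nf] Lg fg].
apply/FsetE; split=> // [|r r1|r r2].
- by apply: filterS2 f_ge0 fg => x + + Bx => /(_ Bx) + /(_ I) fgx; rewrite -fgx.
- exact: (tail_bound_ae_eq pos_part_sublinear (mBc r) Lf Lg fg (pf r r1)).
- exact: (tail_bound_ae_eq neg_part_sublinear (mBc r) Lf Lg fg (nf r r2)).
Qed.

Lemma Fset_closed u f : (forall n, F (u n)) -> L2 f ->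
  L2dist mu (u n) f @[n --> \oo] --> 0%E -> F f.
Proof.
move=> Fu Lf uf; have Lu n : L2 (u n) by have [] := (FsetE _).1 (Fu n).
apply/FsetE; split=> // [|r r1|r r2].
- by apply: (ae_ge0_closed (mB m2) Lf Lu uf) => n; have [] := (FsetE _).1 (Fu n).
- apply: (tail_bound_closed pos_part_sublinear (mBc r) Lf Lu uf) => n.
  by have [_ _ pu _] := (FsetE _).1 (Fu n); exact: pu.
- apply: (tail_bound_closed neg_part_sublinear (mBc r) Lf Lu uf) => n.
  by have [_ _ _ nu] := (FsetE _).1 (Fu n); exact: nu.
Qed.

Lemma Fset_conic s t f g : 0 <= s -> 0 <= t -> F f -> F g ->
  F (fun x => s * f x + t * g x).
Proof.
move=> s0 t0 /FsetE[Lf f_ge0 pf nf] /FsetE[Lg g_ge0 pg ng].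
apply/FsetE; split=> [|||r r2]; first exact: L2_comb.
- apply: filterS2 f_ge0 g_ge0 => x + + Bx => /(_ Bx) fx /(_ Bx) gx.
  by rewrite addr_ge0 // mulr_ge0.
- move=> r r1.
  exact: (tail_bound_conic pos_part_sublinear (mBc r) s0 t0 Lf Lg (pf r r1) (pg r r1)).
- exact: (tail_bound_conic neg_part_sublinear (mBc r) s0 t0 Lf Lg (nf r r2) (ng r r2)).
Qed.

Lemma Fset0 : F (fun _ => 0).
Proof.
apply/FsetE; split=> [|||r _]; first exact: L2_cst.
- exact: aeW.
- by move=> r _; exact: (tail_bound0 mu pos_part_sublinear (alpha r) (mBc r)).
- exact: (tail_bound0 mu neg_part_sublinear (alpha' r) (mBc r)).
Qed.

Lemma Fset_pointed f : F f -> F (fun x => - f x) -> ae_eq mu setT f (cst 0).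
Proof.
move=> /FsetE[Lf f_ge0 pf _] /FsetE[_ Nf_ge0 pNf _].
have on_ball : {ae mu, forall x, B m2 x -> f x = 0}.
  apply: filterS2 f_ge0 Nf_ge0 => x + + Bx => /(_ Bx) fx_ge0 /(_ Bx).
  by rewrite oppr_ge0 => fx_le0; apply/eqP; rewrite eq_le fx_ge0 fx_le0.
have off_ball := tail_bound_pos_part_opp (mBc m2) Lf (pf _ m12) (pNf _ m12).
apply: filterS2 on_ball off_ball => x fx0 fx0' _.
by have [/fx0|/fx0'] := pselect (B m2 x).
Qed.

Lemma Fset_cone : L2cone mu F.
Proof.
apply: L2cone_conic; [exact: Fset_ae_eq|exact: Fset_closed|exact: Fset_conic|
  exact: Fset0|exact: Fset_pointed].
Qed.

Let L2_indic r : L2 (\1_(B r) : T -> R).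
Proof.
apply: (L2_dominated _ _ (L2_cst mu 1)); first exact: measurable_indic.
by move=> x; rewrite indicE; case: (_ \in _); rewrite /= ?normr0 ?normr1.
Qed.

Lemma Rintegral_setC_Bball_le c r0 r k : 0 <= c -> m1 <= r -> L2 k ->
  (forall x, 0 <= k x) -> (forall x, ~ B r0 x -> k x = 0) ->
  Rint setT k <= alpha r0 * c * fine (mu (B m1)) ->
  Rint (~` B r) k <= alpha r * c * fine (mu (B m1)).
Proof.
move=> c0 r1 Lk k_ge0 k_out k_le; have r_gt0 := lt_le_trans m1_gt0 r1.
case: alpha_tail => alpha_ge0 alpha_decr _.
have mu_ge0 : 0 <= fine (mu (B m1)) by exact/fine_ge0/measure_ge0.
have [r0r|rr0] := leP r0 r.
  have -> : Rint (~` B r) k = Rint (~` B r) (cst 0).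
    apply: eq_Rintegral => x /[!inE] /= Brx.
    by apply: k_out; apply: contra_not Brx; exact: Bball_le.
  by rewrite Rintegral_cst // mul0r !mulr_ge0 // alpha_ge0.
apply: le_trans (le_Rintegral_subset (mBc r) measurableT (@subsetT _ _)
  (L2_integrable measurableT Lk) (fun x _ => k_ge0 x)) _.
apply: le_trans k_le _; apply: ler_wpM2r => //; apply: ler_wpM2r => //.
by apply: alpha_decr => //; exact: ltW.
Qed.

Lemma Fset_indic_add c r0 k : 0 <= c -> L2 k -> (forall x, 0 <= k x) ->
  (forall x, ~ B r0 x -> k x = 0) ->
  Rint setT k <= alpha r0 * c * fine (mu (B m1)) ->
  F (fun x => c * \1_(B m1) x + k x).
Proof.
move=> c0 Lk k_ge0 k_out k_le; set f := fun x => _.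
have f_ge0 x : 0 <= f x by rewrite addr_ge0 ?mulr_ge0.
have Lf : L2 f.
  by have := L2_comb c 1 (L2_indic m1) Lk; congr L2; apply/funext => x; rewrite mul1r.
have int_f : Rint setT f = c * fine (mu (B m1)) + Rint setT k.
  have := Rintegral_comb c 1 measurableT (L2_integrable measurableT (L2_indic m1))
    (L2_integrable measurableT Lk).
  rewrite mul1r /Rintegral integral_indic // setIT => <-.
  by congr fine; apply: eq_integral => x _; rewrite mul1r.
have int_f_ge0 : 0 <= Rint setT f by apply: Rintegral_ge0 => x _; exact: f_ge0.
have m1_le_gt0 r : m1 <= r -> 0 < r by move/(lt_le_trans m1_gt0).
apply/FsetE; split=> // [|r r1|r r2].
- by apply: aeW => x _; exact: f_ge0.
- rewrite /tail_bound (_ : Rint _ _ = Rint (~` B r) k).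
    apply: le_trans (Rintegral_setC_Bball_le c0 r1 Lk k_ge0 k_out k_le) _.
    rewrite int_f -mulrA ler_wpM2l ?lerDl ?Rintegral_ge0 //.
    by case: alpha_tail => + _ _; apply; exact: m1_le_gt0.
  apply: eq_Rintegral => x /[!inE] /= Brx; rewrite pos_part_id ?f_ge0 // /f.
  by rewrite indicE memNset ?mulr0 ?add0r //; apply: contra_not Brx; exact: Bball_le.
- rewrite /tail_bound; have -> : Rint (~` B r) (neg_part \o f) = 0.
    rewrite -(mul0r (fine (mu (~` B r)))) -Rintegral_cst //.
    by apply: eq_Rintegral => x _; apply/eqP; rewrite /= neg_part_eq0.
  rewrite mulr_ge0 //; case: alpha'_tail => + _ _; apply.
  by apply: m1_le_gt0; exact: le_trans m12 r2.
Qed.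

Hypotheses (muB_gt0 : (0 < mu (B m1))%E) (alpha_gt0 : forall r, 0 < r -> 0 < alpha r).

Lemma Fset_annihilator_le0 g : L2 g ->
  (forall f, F f -> Rint setT (fun x => f x * g x) = 0) ->
  forall r0, 0 < r0 -> {ae mu, forall x, B r0 x -> g x <= 0}.
Proof.
move=> Lg g_ann r0 r0_gt0; have alpha_r0 := alpha_gt0 r0_gt0.
have mu_gt0 : 0 < fine (mu (B m1)).
  by apply: fine_gt0; rewrite muB_gt0 ltey_eq fin_num_measure.
have indic_ann : Rint setT (fun x => \1_(B m1) x * g x) = 0.
  have F1 : F (fun x => 1 * \1_(B m1) x + cst 0 x).
    apply: (Fset_indic_add (r0 := r0)) => //; first exact: L2_cst.
    by rewrite Rintegral_cst // mul0r mulr1 mulr_ge0 // ltW.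
  by rewrite -(g_ann _ F1); apply: eq_Rintegral => x _; rewrite mul1r addr0.
pose k x := pos_part (g x) * \1_(B r0) x.
have Lk : L2 k.
  apply: (L2_dominated _ _ Lg).
    apply: measurable_funM; last exact: measurable_indic.
    by apply: measurableT_comp measurable_pos_part (L2_measurable Lg).
  move=> x; rewrite /k indicE; case: (_ \in _); rewrite /= ?mulr0 ?normr0 // mulr1.
  exact: pos_part_norm_le.
have k_ge0 x : 0 <= k x by rewrite mulr_ge0 ?pos_part_ge0 // indicE ler0n.
have k_out x : ~ B r0 x -> k x = 0 by move=> Bx; rewrite /k indicE memNset ?mulr0.
pose c := Rint setT k / (alpha r0 * fine (mu (B m1))).
have c_ge0 : 0 <= c.
  apply: divr_ge0; first by apply: Rintegral_ge0 => x _; exact: k_ge0.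
  by rewrite mulr_ge0 // ltW.
have Fk : F (fun x => c * \1_(B m1) x + k x).
  apply: (Fset_indic_add (r0 := r0)) => //.
  by rewrite mulrAC mulrC /c divfK // gt_eqF // mulr_gt0.
have kg_ann : Rint setT (fun x => k x * g x) = 0.
  have := g_ann _ Fk; under eq_Rintegral do rewrite mulrDl -mulrA.
  rewrite RintegralD ?RintegralZl ?indic_ann ?mulr0 ?add0r //.
  - exact: L2_mul_integrable.
  - exact: (integrableZl measurableT c (L2_mul_integrable (L2_indic m1) Lg)).
  - exact: L2_mul_integrable.
have kg_ge0 x : 0 <= k x * g x by rewrite /k mulrAC mulr_ge0 ?pos_part_mul_ge0.
have := Rintegral_eq0_ae measurableT (L2_mul_integrable Lk Lg) (fun x _ => kg_ge0 x) kg_ann.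
apply: filterS => x /(_ I) /eqP + Bx; rewrite /k indicE mem_set // mulr1.
by rewrite mulf_eq0 pos_part_eq0 => /orP[//|/eqP ->].
Qed.

Lemma Fset_total g : L2 g ->
  (forall f, F f -> Rint setT (fun x => f x * g x) = 0) -> ae_eq mu setT g (cst 0).
Proof.
move=> Lg g_ann.
have Ng_ann f : F f -> Rint setT (fun x => f x * - g x) = 0.
  move=> Ff; have [Lf _ _ _] := (FsetE _).1 Ff.
  under eq_Rintegral do rewrite mulrN.
  by rewrite RintegralN ?L2_mul_integrable // g_ann ?oppr0.
have ball_ae n : {ae mu, forall x, B n.+1%:R x -> g x = 0}.
  have := Fset_annihilator_le0 (L2_opp Lg) Ng_ann (ltr0Sn _ n).
  have := Fset_annihilator_le0 Lg g_ann (ltr0Sn _ n).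
  apply: filterS2 => x + + Bx => /(_ Bx) g_le0 /(_ Bx).
  by rewrite oppr_le0 => g_ge0; apply/eqP; rewrite eq_le g_le0.
apply: filterS (ae_foralln ball_ae) => x gx0 _; apply: gx0.
exact/ltW/truncnS_gt.
Qed.

End Fset_cone.

Theorem lemma3p1 (disp : measure_display) (T : measurableType disp)
  (R : realType) (dX : T -> T -> R) (x0 : T) (mu : probability T R)
  (m1 m2 : R) (alpha alpha' : R -> R) :
  polish_borel dX ->
  0 < m1 -> m1 <= m2 ->
  tail_function alpha -> tail_function alpha' ->
  (0 < mu (Bball dX x0 m1))%E ->
  (forall r, 0 < r -> 0 < alpha r) ->
  L2cone mu (Fset dX x0 mu m1 m2 alpha alpha') /\
  L2cone mu (Gset dX x0 mu m1 m2 alpha alpha').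
Proof.
move=> [[dX_metric _ _] borel] m1_gt0 m12 alpha_tail alpha'_tail muB_gt0 alpha_gt0.
have mB r : measurable (Bball dX x0 r).
  rewrite -[Bball _ _ _]setCK; apply: measurableC; rewrite borel.
  by apply: sub_sigma_algebra; exact: dopen_setC_Bball.
have Fcone := Fset_cone mu alpha alpha' mB m12.
split=> //; have [[FL2 _] _ _ _ _] := Fcone.
exact: L2dual_cone FL2 (Fset_total mB m1_gt0 m12 alpha_tail alpha'_tail muB_gt0 alpha_gt0).
Qed.
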